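(* Let $c>0$, $k>1$, $\eta\in(0,\tfrac12)$, $Q\ge 0$. Consider the $2\times1$ merge network with upstream capacities $c_1=c$, $c_2=kc$, inflows $f_1=\eta c$, $f_2=k\eta c$, downstream capacity $c_0=(k+1)c$ and constant downstream queue length $Q$, with weights $\gamma_0,\gamma_1,\gamma_2>0$. For an ordered pair $(u,s)\in\{(1,2),(2,1)\}$ set $$q_{s,act}=\frac{\gamma_0}{\gamma_s}Q+\frac{\gamma_u f_u-\gamma_0 Q}{\gamma_s c_s}\,c_u,$$ and say that the R1 state $(u,s)$ can exist if $q_{s,act}\ge c_s$. Then, in regime R1: (a) the state $(u,s)=(1,2)$ can exist when: for $\gamma_0=\gamma_1=\gamma_2=1$, $Q\ge \frac{k^2-\eta}{k-1}c$; for $\gamma_i=1/c_i$ ($i=0,1,2$), $Q\ge \frac{k-\eta}{k-1}(k+1)c$; (b) the state $(u,s)=(2,1)$ can exist when: for $\gamma_0=\gamma_1=\gamma_2=1$, $Q\le \frac{k^2\eta-1}{k-1}c$; for $\gamma_i=1/c_i$ ($i=0,1,2$), $Q\le \frac{k\eta-1}{k-1}(k+1)c$.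
   Context: Model: two upstream queues merging into a downstream queue of constant length $Q$; the generalized backpressure priority of upstream queue $i$ is $p_i=(\gamma_i q_i-\gamma_0 Q)c_i$, and each upstream queue length is at least its inflow $f_i$, so its minimal priority is $p_i(f_i)$. The activation priority $p_{act}=\max_j p_j(f_j)$ is the minimal priority a queue needs to be activated, and $q_{i,act}=\frac{\gamma_0}{\gamma_i}Q+\frac{p_{act}}{\gamma_i c_i}$ is the corresponding queue length. Regime R1: one upstream queue, $u$, is unsaturated (outflow below capacity) and the other, $s$, is saturated (outflow equal to capacity $c_s$ when activated). In R1, $p_{act}=p_u(f_u)$, and queue $s$ being saturated corresponds to $q_{s,act}\ge c_s$. The weights $\gamma\equiv1$ give classical backpressure; $\gamma_i=1/c_i$ (including $\gamma_0=1/c_0$ for the downstream queue) give the re-scaled variant. *)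

From mathcomp Require Import all_boot all_order all_algebra.
Set Implicit Arguments. Unset Strict Implicit. Unset Printing Implicit Defensive.
Import Order.TTheory GRing.Theory Num.Theory.
Local Open Scope ring_scope.

(* 2x1 merge network: queue indices 0 (downstream), 1, 2 (upstream). *)
Section Merge.
Variable R : realFieldType.

Definition cap (c k : R) (i : nat) : R :=
  match i with 0%N => (k + 1) * c | 1%N => c | _ => k * c end.

Definition inflow (c k eta : R) (i : nat) : R :=
  match i with 2%N => k * eta * c | _ => eta * c end.

Definition classical_weights : nat -> R := fun _ => 1.
Definition rescaled_weights (c k : R) : nat -> R := fun i => (cap c k i)^-1.

Definition q_s_act (gam : nat -> R) (c k eta Q : R) (u s : nat) : R :=
  gam 0%N / gam s * Q
  + (gam u * inflow c k eta u - gam 0%N * Q) / (gam s * cap c k s) * cap c k u.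

Definition R1_can_exist (gam : nat -> R) (c k eta Q : R) (u s : nat) : Prop :=
  cap c k s <= q_s_act gam c k eta Q u s.
End Merge.

(* Clearing the positive denominator gamma_s c_s, the R1 condition q_{s,act} >= c_s is
   the linear inequality gamma_s c_s^2 - gamma_u f_u c_u <= gamma_0 Q (c_s - c_u) in Q.
   It is therefore a lower bound on Q when c_u < c_s (state (1,2)) and an upper bound
   when c_s < c_u (state (2,1)); the four bounds of the proposition are this threshold
   for the two choices of weights. *)
From mathcomp Require Import all_boot all_order all_algebra.
From mathcomp Require Import ring lra.
Import Order.TTheory GRing.Theory Num.Theory.
Local Open Scope ring_scope.

Set Implicit Arguments.
Unset Strict Implicit.

Section R1Threshold.
Variables (R : realFieldType) (gam : nat -> R) (c k eta : R) (u s : nat).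

Definition R1_threshold : R :=
  (gam s * cap c k s ^+ 2 - gam u * inflow c k eta u * cap c k u)
  / (gam 0%N * (cap c k s - cap c k u)).

Hypotheses (gam0_gt0 : 0 < gam 0%N) (gams_gt0 : 0 < gam s) (caps_gt0 : 0 < cap c k s).

Lemma R1_can_existE (Q : R) :
  R1_can_exist gam c k eta Q u s <->
  gam s * cap c k s ^+ 2 - gam u * inflow c k eta u * cap c k u
    <= Q * (gam 0%N * (cap c k s - cap c k u)).
Proof.
have gcs_gt0 : 0 < gam s * cap c k s by rewrite mulr_gt0.
rewrite /R1_can_exist -(ler_pM2r gcs_gt0) /q_s_act lerBlDr.
have -> : (gam 0%N / gam s * Q
           + (gam u * inflow c k eta u - gam 0%N * Q) / (gam s * cap c k s) * cap c k u)
          * (gam s * cap c k s)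
        = Q * (gam 0%N * (cap c k s - cap c k u)) + gam u * inflow c k eta u * cap c k u.
  by field; rewrite !gt_eqF.
by rewrite mulrCA -expr2.
Qed.

Lemma R1_can_exist_lower (Q : R) : cap c k u < cap c k s ->
  R1_can_exist gam c k eta Q u s <-> R1_threshold <= Q.
Proof.
move=> lt_us; rewrite R1_can_existE /R1_threshold ler_pdivrMr //.
by rewrite mulr_gt0 // subr_gt0.
Qed.

Lemma R1_can_exist_upper (Q : R) : cap c k s < cap c k u ->
  R1_can_exist gam c k eta Q u s <-> Q <= R1_threshold.
Proof.
move=> lt_su; rewrite R1_can_existE /R1_threshold ler_ndivlMr //.
by rewrite pmulr_rlt0 // subr_lt0.
Qed.

End R1Threshold.

Section ThresholdValues.
Variables (R : realFieldType) (c k eta : R).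
Hypotheses (c_neq0 : c != 0) (k_neq0 : k != 0) (k1_neq0 : k - 1 != 0) (k1p_neq0 : k + 1 != 0).

Let kc_sub_c_neq0 : k * c - c != 0.
Proof. by rewrite -[X in _ - X]mul1r -mulrBl mulf_neq0. Qed.

Let c_sub_kc_neq0 : c - k * c != 0.
Proof. by rewrite -opprB oppr_eq0. Qed.

Let neq0 := (c_neq0, k_neq0, k1_neq0, k1p_neq0, kc_sub_c_neq0, c_sub_kc_neq0).

Lemma R1_threshold_classical_12 :
  R1_threshold (classical_weights R) c k eta 1 2 = (k ^+ 2 - eta) / (k - 1) * c.
Proof. by rewrite /R1_threshold /classical_weights /=; field; rewrite !neq0. Qed.

Lemma R1_threshold_rescaled_12 :
  R1_threshold (rescaled_weights c k) c k eta 1 2 = (k - eta) / (k - 1) * (k + 1) * c.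
Proof. by rewrite /R1_threshold /rescaled_weights /=; field; rewrite !neq0. Qed.

Lemma R1_threshold_classical_21 :
  R1_threshold (classical_weights R) c k eta 2 1 = (k ^+ 2 * eta - 1) / (k - 1) * c.
Proof. by rewrite /R1_threshold /classical_weights /=; field; rewrite !neq0. Qed.

Lemma R1_threshold_rescaled_21 :
  R1_threshold (rescaled_weights c k) c k eta 2 1 = (k * eta - 1) / (k - 1) * (k + 1) * c.
Proof. by rewrite /R1_threshold /rescaled_weights /=; field; rewrite !neq0. Qed.

End ThresholdValues.

Theorem proposition3 (R : realFieldType) (c k eta Q : R) :
  0 < c -> 1 < k -> 0 < eta -> eta < 1 / 2 -> 0 <= Q ->
  (* (a) state (u,s) = (1,2) *)
  ((R1_can_exist (classical_weights R) c k eta Q 1 2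
      <-> (k ^+ 2 - eta) / (k - 1) * c <= Q)
   /\ (R1_can_exist (rescaled_weights c k) c k eta Q 1 2
      <-> (k - eta) / (k - 1) * (k + 1) * c <= Q))
  /\
  (* (b) state (u,s) = (2,1) *)
  ((R1_can_exist (classical_weights R) c k eta Q 2 1
      <-> Q <= (k ^+ 2 * eta - 1) / (k - 1) * c)
   /\ (R1_can_exist (rescaled_weights c k) c k eta Q 2 1
      <-> Q <= (k * eta - 1) / (k - 1) * (k + 1) * c)).
Proof.
move=> c_gt0 k_gt1 _ _ _.
have c1_lt_c2 : cap c k 1 < cap c k 2 by rewrite /= ltr_pMl.
have [c0_gt0 c1_gt0 c2_gt0] : [/\ 0 < cap c k 0, 0 < cap c k 1 & 0 < cap c k 2].
  by rewrite /= !mulr_gt0 //; lra.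
have [c_neq0 k_neq0 k1_neq0 k1p_neq0] : [/\ c != 0, k != 0, k - 1 != 0 & k + 1 != 0].
  by split; apply/eqP; lra.
split; split.
- by rewrite R1_can_exist_lower ?ltr01 // R1_threshold_classical_12.
- by rewrite R1_can_exist_lower ?invr_gt0 // R1_threshold_rescaled_12.
- by rewrite R1_can_exist_upper ?ltr01 // R1_threshold_classical_21.
- by rewrite R1_can_exist_upper ?invr_gt0 // R1_threshold_rescaled_21.
Qed.
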